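(* Consider the three-dimensional stochastic Maxwell equations in the stochastic Hamiltonian form $$\mathbf{K}\,{\rm d}_{t}\mathcal{E}+\mathbf{L}_{1}\mathcal{E}_{x}{\rm d}t+\mathbf{L}_{2}\mathcal{E}_{y}{\rm d}t+\mathbf{L}_{3}\mathcal{E}_{z}{\rm d}t=\nabla S(\mathcal{E})\circ{\rm d}W(t)$$ with periodic boundary conditions, discretized by the stochastic Runge-Kutta method described in the context, whose coefficients satisfy $b_kb_j-b_ka_{kj}-b_ja_{jk}=0$, $\overline{b}_p\overline{b}_q-\overline{b}_p\overline{a}_{pq}-\overline{b}_q\overline a_{qp}=0$, $\widetilde{b}_m\widetilde{b}_n-\widetilde{b}_m\widetilde{a}_{mn}-\widetilde{b}_n\widetilde{a}_{nm}=0$, $\widehat{b}_l\widehat{b}_v-\widehat{b}_l\widehat{a}_{lv}-\widehat{b}_v\widehat{a}_{vl}=0$ for all indices. Then for all $\rho=0,1,\dots,N$, almost surely, $$\sum_{i_1}\sum_{i_2}\sum_{i_3}\sum_{m=1}^{s}\sum_{p=1}^{\iota}\sum_{l=1}^{\sigma}\widetilde{b}_{m}\overline{b}_p\widehat{b}_l\Big(|\mathbf{E}_{mpl;i_1,i_2,i_3}^{\rho+1}|^2+|\mathbf{H}_{mpl;i_1,i_2,i_3}^{\rho+1}|^2\Big)=\sum_{i_1}\sum_{i_2}\sum_{i_3}\sum_{m=1}^{s}\sum_{p=1}^{\iota}\sum_{l=1}^{\sigma}\widetilde{b}_{m}\overline{b}_p\widehat{b}_l\Big(|\mathbf{E}_{mpl;i_1,i_2,i_3}^{\rho}|^2+|\mathbf{H}_{mpl;i_1,i_2,i_3}^{\rho}|^2\Big),$$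 where the sums over $i_1,i_2,i_3$ run over all spatial cells of the periodic grid.
   Context: $\mathcal{E}=(H^T,E^T)^T\in\mathbb{R}^6$; $S(\mathcal{E})=\frac{\lambda}{2}(|E_1|^2+|E_2|^2+|E_3|^2+|H_1|^2+|H_2|^2+|H_3|^2)$ for a real constant $\lambda$; $\mathbf{K}=\begin{pmatrix}0&-I_3\\ I_3&0\end{pmatrix}$, $\mathbf{L}_i=\begin{pmatrix}\mathcal{D}_i&0\\0&\mathcal{D}_i\end{pmatrix}$ with $\mathcal{D}_1=\begin{pmatrix}0&0&0\\0&0&-1\\0&1&0\end{pmatrix}$, $\mathcal{D}_2=\begin{pmatrix}0&0&1\\0&0&0\\-1&0&0\end{pmatrix}$, $\mathcal{D}_3=\begin{pmatrix}0&-1&0\\1&0&0\\0&0&0\end{pmatrix}$; $W$ is a $Q$-Wiener process, Stratonovich sense. The method (time step $\tau$, space steps $\Delta x,\Delta y,\Delta z$; temporal coefficients $a_{kj},b_k$, $k,j=1..r$; spatial coefficients $\widetilde{a}_{mn},\widetilde{b}_m$ ($s$ stages, $x$), $\overline{a}_{pq},\overline{b}_p$ ($\iota$ stages, $y$), $\widehat{a}_{lv},\widehat{b}_l$ ($\sigma$ stages, $z$)) has on each space-time cell stage values $\Upsilon_{mplk}\in\mathbb{R}^6$, discrete derivatives $\delta_t\Upsilon,\delta_x\Upsilon,\delta_y\Upsilon,\delta_z\Upsilon$, time-level values $\mathcal{E}^\rho_{mpl}$ and face values, related by $\Upsilon_{mplk}=\mathcal{E}_{mpl}^{\rho}+\tau\sum_{j}a_{kj}\delta_t\Upsilon_{mplj}$,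 $\mathcal{E}_{mpl}^{\rho+1}=\mathcal{E}_{mpl}^{\rho}+\tau\sum_{k}b_{k}\delta_t\Upsilon_{mplk}$, $\Upsilon_{mplk}=\mathcal{E}_{i_1pl}^{k}+\Delta x\sum_{n}\widetilde{a}_{mn}\delta_{x}\Upsilon_{nplk}$, $\mathcal{E}_{(i_1+1)pl}^{k}=\mathcal{E}_{i_1pl}^{k}+\Delta x\sum_{m}\widetilde{b}_{m}\delta_{x}\Upsilon_{mplk}$, $\Upsilon_{mplk}=\mathcal{E}_{mi_2l}^{k}+\Delta y\sum_{q}\overline{a}_{pq}\delta_{y}\Upsilon_{mqlk}$, $\mathcal{E}_{m(i_{2}+1)l}^{k}=\mathcal{E}_{mi_2l}^{k}+\Delta y\sum_{p}\overline{b}_{p}\delta_{y}\Upsilon_{mplk}$, $\Upsilon_{mplk}=\mathcal{E}_{mpi_3}^{k}+\Delta z\sum_{v}\widehat{a}_{lv}\delta_{z}\Upsilon_{mpvk}$, $\mathcal{E}_{mp(i_3+1)}^{k}=\mathcal{E}_{mpi_3}^{k}+\Delta z\sum_{u}\widehat{b}_{u}\delta_{z}\Upsilon_{mpuk}$, $\tau\mathbf{K}\delta_{t}\Upsilon_{mplk}+\tau\sum_{i=1}^3\mathbf{L}_{i}\delta_{x_i}\Upsilon_{mplk}=\nabla S(\Upsilon_{mplk})\Delta W$, with $(\delta_{x_1},\delta_{x_2},\delta_{x_3})=(\delta_x,\delta_y,\delta_z)$ and $\Delta W$ the real Wiener increment at the stage point. $\mathcal{E}^{\rho}_{mpl;i_1,i_2,i_3}=((\mathbf{H}^{\rho}_{mpl;i_1,i_2,i_3})^T,(\mathbf{E}^{\rho}_{mpl;i_1,i_2,i_3})^T)^T$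 denotes the value $\mathcal{E}^\rho_{mpl}$ of the spatial cell indexed by $(i_1,i_2,i_3)$. *)

From HB Require Import structures.
From mathcomp Require Import all_boot all_order all_algebra.
Set Implicit Arguments. Unset Strict Implicit. Unset Printing Implicit Defensive.
Import Order.TTheory GRing.Theory Num.Theory.
Local Open Scope ring_scope.

Section MaxwellDefs.
Variable R : realFieldType.

Definition Dmat1 : 'M[R]_3 := \matrix_(i < 3, j < 3)
  (if (i == 1%N :> nat) && (j == 2%N :> nat) then -1
   else if (i == 2%N :> nat) && (j == 1%N :> nat) then 1 else 0).
Definition Dmat2 : 'M[R]_3 := \matrix_(i < 3, j < 3)
  (if (i == 0%N :> nat) && (j == 2%N :> nat) then 1
   else if (i == 2%N :> nat) && (j == 0%N :> nat) then -1 else 0).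
Definition Dmat3 : 'M[R]_3 := \matrix_(i < 3, j < 3)
  (if (i == 0%N :> nat) && (j == 1%N :> nat) then -1
   else if (i == 1%N :> nat) && (j == 0%N :> nat) then 1 else 0).

Definition Kmat : 'M[R]_6 := block_mx 0 (- 1%:M) 1%:M 0 : 'M[R]_(3 + 3).
Definition Lmat (D : 'M[R]_3) : 'M[R]_6 := block_mx D 0 0 D : 'M[R]_(3 + 3).

(* calE = (H^T, E^T)^T *)
Definition Hpart (v : 'cV[R]_6) : 'cV[R]_3 := usubmx (v : 'cV[R]_(3 + 3)).
Definition Epart (v : 'cV[R]_6) : 'cV[R]_3 := dsubmx (v : 'cV[R]_(3 + 3)).
Definition sqnorm3 (u : 'cV[R]_3) : R := \sum_(i < 3) (u i 0) ^+ 2.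

Definition Sfun (lam : R) (v : 'cV[R]_6) : R :=
  lam / 2%:R * (sqnorm3 (Epart v) + sqnorm3 (Hpart v)).
Definition gradS (lam : R) (v : 'cV[R]_6) : 'cV[R]_6 := lam *: v.

End MaxwellDefs.

(* The coefficient conditions say that each one-dimensional Runge-Kutta tableau
   is symplectic, so for every symmetric matrix M the quadratic form v^T M v
   changes over one step of size c by exactly 2 c sum_k b_k Y_k^T M D_k
   (Y_k the stages, D_k the stage derivatives).  We use this in time with
   M = I and in each space direction with the symmetric matrix K L_i.
   Multiplying the stage equation by K gives Y^T d_t Y = sum_i Y^T K L_i d_i Y,
   the noise term lambda dW Y^T K Y vanishing because K is skew.  Hence on each
   cell the change of the discrete energy is tau times a discrete divergence of
   the face fluxes F^T K L_i F, and on a periodic grid these telescope away. *)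

From HB Require Import structures.
From mathcomp Require Import all_boot all_order all_algebra.
From mathcomp Require Import ring.
Import Order.TTheory GRing.Theory Num.Theory.
Set Implicit Arguments.
Unset Strict Implicit.
Unset Printing Implicit Defensive.

Local Open Scope ring_scope.

Section BilinearForm.
Variables (R : comPzRingType) (n : nat).
Implicit Types (M N : 'M[R]_n) (u v w : 'cV[R]_n).

Definition bform M u v : R := (u^T *m M *m v) 0 0.

Lemma bformDr M u v w : bform M u (v + w) = bform M u v + bform M u w.
Proof. by rewrite /bform mulmxDr mxE. Qed.

Lemma bformZr M u c v : bform M u (c *: v) = c * bform M u v.
Proof. by rewrite /bform -scalemxAr mxE. Qed.

Lemma bform_sumr M u (I : finType) (F : I -> 'cV[R]_n) :
  bform M u (\sum_i F i) = \sum_i bform M u (F i).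
Proof. by rewrite /bform mulmx_sumr summxE. Qed.

Lemma bformDl M u v w : bform M (u + v) w = bform M u w + bform M v w.
Proof. by rewrite /bform linearD !mulmxDl mxE. Qed.

Lemma bformZl M c u v : bform M (c *: u) v = c * bform M u v.
Proof. by rewrite /bform linearZ /= -!scalemxAl mxE. Qed.

Lemma bform_suml M v (I : finType) (F : I -> 'cV[R]_n) :
  bform M (\sum_i F i) v = \sum_i bform M (F i) v.
Proof. by rewrite /bform raddf_sum !mulmx_suml summxE. Qed.

Lemma bform_mulmxr M N u v : bform M u (N *m v) = bform (M *m N) u v.
Proof. by rewrite /bform !mulmxA. Qed.

Lemma bform_tr M u v : bform M u v = bform M^T v u.
Proof.
rewrite /bform; have -> : v^T *m M^T *m u = (u^T *m M *m v)^T.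
  by rewrite !trmx_mul trmxK mulmxA.
by rewrite [RHS]mxE.
Qed.

Lemma bformC M u v : M^T = M -> bform M u v = bform M v u.
Proof. by move=> symM; rewrite bform_tr symM. Qed.

End BilinearForm.

Lemma bform_skew (R : numDomainType) n (M : 'M[R]_n) (u : 'cV[R]_n) :
  M^T = - M -> bform M u u = 0.
Proof.
move=> skewM; apply/eqP; rewrite -eqNr; apply/eqP.
by rewrite {2}bform_tr skewM /bform mulmxN mulNmx [RHS]mxE.
Qed.

Lemma symplectic_rk_bform_increment (R : comPzRingType) n r (M : 'M[R]_n) (c : R)
    (a : 'I_r -> 'I_r -> R) (b : 'I_r -> R) (y0 y1 : 'cV[R]_n) (Y D : 'I_r -> 'cV[R]_n) :
  M^T = M ->
  (forall k j, b k * b j - b k * a k j - b j * a j k = 0) ->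
  (forall k, Y k = y0 + c *: \sum_j a k j *: D j) ->
  y1 = y0 + c *: \sum_k b k *: D k ->
  bform M y1 y1 - bform M y0 y0 = 2%:R * c * \sum_k b k * bform M (Y k) (D k).
Proof.
move=> symM sympl defY ->; set S := \sum_k b k *: D k.
pose g k j := bform M (D k) (D j).
have gC k j : g k j = g j k by apply: bformC.
have stages : \sum_k b k * bform M (Y k) (D k)
    = bform M y0 S + c * \sum_k \sum_j b k * a k j * g k j.
  rewrite bform_sumr mulr_sumr -big_split; apply: eq_bigr => k _ /=.
  rewrite defY bformDl bformZl bform_suml bformZr mulr_sumr mulr_sumr mulrDr.
  congr (_ + _); rewrite mulr_sumr; apply: eq_bigr => j _.
  by rewrite bformZl gC /g; ring.
have SS : bform M S S = 2%:R * \sum_k \sum_j b k * a k j * g k j.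
  have -> : bform M S S = \sum_k \sum_j (b k * a k j + b j * a j k) * g k j.
    rewrite bform_suml; apply: eq_bigr => k _; rewrite bformZl bform_sumr mulr_sumr.
    apply: eq_bigr => j _; rewrite bformZr.
    have -> : b k * a k j + b j * a j k = b k * b j.
      by apply/esym/eqP; rewrite -subr_eq0 opprD addrA sympl.
    by rewrite /g; ring.
  rewrite mulr2n mulrDl mul1r.
  under eq_bigr do (under eq_bigr do rewrite mulrDl; rewrite big_split).
  rewrite big_split /=; congr (_ + _); rewrite exchange_big /=.
  by apply: eq_bigr => k _; apply: eq_bigr => j _; rewrite gC.
rewrite stages bformDl !bformDr !bformZl !bformZr SS (bformC _ _ symM); ring.
Qed.

Section MaxwellMatrices.
Variable R : realFieldType.

Lemma Kmat_sqr : Kmat R *m Kmat R = - 1%:M.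
Proof.
change (@mulmx R (3 + 3) (3 + 3) (3 + 3) (Kmat R) (Kmat R) = - (1%:M : 'M[R]_(3 + 3))).
rewrite /Kmat mulmx_block !mul0mx !mulmx0 !mul1mx !mulmx1 !addr0 !add0r.
by rewrite (scalar_mx_block 3 3) opp_block_mx oppr0.
Qed.

Lemma tr_Kmat : (Kmat R)^T = - Kmat R.
Proof.
change (@trmx R (3 + 3) (3 + 3) (Kmat R) = - (Kmat R : 'M[R]_(3 + 3))).
by rewrite /Kmat tr_block_mx opp_block_mx !trmx0 trmx1 linearN /= trmx1 oppr0 opprK.
Qed.

Lemma tr_Kmat_Lmat (D : 'M[R]_3) : D^T = - D -> (Kmat R *m Lmat D)^T = Kmat R *m Lmat D.
Proof.
move=> skewD.
change (@trmx R (3 + 3) (3 + 3) (@mulmx R (3 + 3) (3 + 3) (3 + 3) (Kmat R) (Lmat D))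
  = @mulmx R (3 + 3) (3 + 3) (3 + 3) (Kmat R) (Lmat D)).
rewrite /Kmat /Lmat mulmx_block !mul0mx !mulmx0 !mul1mx !addr0 !add0r mulNmx mul1mx.
by rewrite tr_block_mx !trmx0 linearN /= skewD opprK.
Qed.

Lemma tr_Dmat1 : (Dmat1 R)^T = - Dmat1 R.
Proof.
apply/matrixP => i j; rewrite !mxE.
by case: i => [[|[|[|?]]] ?]; case: j => [[|[|[|?]]] ?] //=; rewrite ?oppr0 ?opprK.
Qed.

Lemma tr_Dmat2 : (Dmat2 R)^T = - Dmat2 R.
Proof.
apply/matrixP => i j; rewrite !mxE.
by case: i => [[|[|[|?]]] ?]; case: j => [[|[|[|?]]] ?] //=; rewrite ?oppr0 ?opprK.
Qed.

Lemma tr_Dmat3 : (Dmat3 R)^T = - Dmat3 R.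
Proof.
apply/matrixP => i j; rewrite !mxE.
by case: i => [[|[|[|?]]] ?]; case: j => [[|[|[|?]]] ?] //=; rewrite ?oppr0 ?opprK.
Qed.

Lemma energy_bform (v : 'cV[R]_6) : sqnorm3 (Epart v) + sqnorm3 (Hpart v) = bform 1%:M v v.
Proof.
rewrite /bform mulmx1 mxE /sqnorm3 /Epart /Hpart (@big_split_ord _ _ _ 3 3) /= addrC.
by congr (_ + _); apply: eq_bigr => i _; rewrite !mxE expr2.
Qed.

Lemma bform_stage_derivative (lam c tau : R) (U d A : 'cV[R]_6) :
  tau != 0 -> tau *: (Kmat R *m d) + tau *: A = c *: gradS lam U ->
  bform 1%:M U d = bform (Kmat R) U A.
Proof.
move=> tau_neq0 stage.
have tau_d : tau *: d = tau *: (Kmat R *m A) + (- (c * lam)) *: (Kmat R *m U).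
  move/(congr1 (mulmx (Kmat R))): stage.
  rewrite mulmxDr -!scalemxAr mulmxA Kmat_sqr mulNmx mul1mx /gradS scalerA => stageK.
  by rewrite scaleNr -stageK scalerN opprD opprK addrCA subrr addr0.
apply: (mulfI tau_neq0); rewrite -bformZr tau_d bformDr !bformZr !bform_mulmxr mul1mx.
by rewrite (bform_skew _ tr_Kmat) mulr0 addr0.
Qed.

End MaxwellMatrices.

Lemma sumr_shift_sub (R : zmodType) (T : finType) (h : T -> T) (g : T -> R) :
  injective h -> \sum_c (g (h c) - g c) = 0.
Proof. by move=> inj_h; rewrite sumrB [X in _ - X](reindex_inj inj_h) subrr. Qed.

Lemma periodic_grid_balance (R : comPzRingType) (N1 N2 N3 : nat)
    (e0 e1 gx gy gz : 'I_N1 -> 'I_N2 -> 'I_N3 -> R) (cx cy cz : R) :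
  (forall i1 i2 i3, e1 i1 i2 i3 - e0 i1 i2 i3 =
       cx * (gx (ordS i1) i2 i3 - gx i1 i2 i3)
     + cy * (gy i1 (ordS i2) i3 - gy i1 i2 i3)
     + cz * (gz i1 i2 (ordS i3) - gz i1 i2 i3)) ->
  \sum_i1 \sum_i2 \sum_i3 e1 i1 i2 i3 = \sum_i1 \sum_i2 \sum_i3 e0 i1 i2 i3.
Proof.
move=> balance.
have sum3E (F : 'I_N1 -> 'I_N2 -> 'I_N3 -> R) :
    \sum_i1 \sum_i2 \sum_i3 F i1 i2 i3 = \sum_(c : 'I_N1 * ('I_N2 * 'I_N3)) F c.1 c.2.1 c.2.2.
  by under eq_bigr do rewrite pair_big; rewrite pair_big.
apply/eqP; rewrite -subr_eq0 !sum3E -sumrB.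
under eq_bigr do rewrite balance.
rewrite !big_split -!mulr_sumr /=.
rewrite (sumr_shift_sub (fun c => gx c.1 c.2.1 c.2.2)
  (h := fun c => (ordS c.1, c.2))); last first.
  by move=> [x1 y1] [x2 y2] /= /pair_equal_spec[/ordS_inj -> ->].
rewrite (sumr_shift_sub (fun c => gy c.1 c.2.1 c.2.2)
  (h := fun c => (c.1, (ordS c.2.1, c.2.2)))); last first.
  by move=> [x1 [y1 z1]] [x2 [y2 z2]] /= /pair_equal_spec[-> /pair_equal_spec[/ordS_inj -> ->]].
rewrite (sumr_shift_sub (fun c => gz c.1 c.2.1 c.2.2)
  (h := fun c => (c.1, (c.2.1, ordS c.2.2)))); last first.
  by move=> [x1 [y1 z1]] [x2 [y2 z2]] /= /pair_equal_spec[-> /pair_equal_spec[-> /ordS_inj ->]].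
by rewrite !mulr0 !addr0.
Qed.

Definition wsum3 (R : pzSemiRingType) (I J K : finType) (w1 : I -> R) (w2 : J -> R) (w3 : K -> R)
    (f : I -> J -> K -> R) : R :=
  \sum_i \sum_j \sum_k w1 i * w2 j * w3 k * f i j k.

Lemma eq_wsum3 (R : pzSemiRingType) (I J K : finType) (w1 : I -> R) (w2 : J -> R) (w3 : K -> R)
    (f g : I -> J -> K -> R) :
  (forall i j k, f i j k = g i j k) -> wsum3 w1 w2 w3 f = wsum3 w1 w2 w3 g.
Proof. by move=> fg; do 3 apply: eq_bigr => ? _; rewrite fg. Qed.

Lemma wsum3_rk_increment (R : comPzRingType) (I J K : finType) n r
    (w1 : I -> R) (w2 : J -> R) (w3 : K -> R) (M : 'M[R]_n) (c : R)
    (a : 'I_r -> 'I_r -> R) (b : 'I_r -> R) (y0 y1 : I -> J -> K -> 'cV[R]_n)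
    (Y D : I -> J -> K -> 'I_r -> 'cV[R]_n) :
  M^T = M ->
  (forall k j, b k * b j - b k * a k j - b j * a j k = 0) ->
  (forall i1 i2 i3 k, Y i1 i2 i3 k = y0 i1 i2 i3 + c *: \sum_j a k j *: D i1 i2 i3 j) ->
  (forall i1 i2 i3, y1 i1 i2 i3 = y0 i1 i2 i3 + c *: \sum_k b k *: D i1 i2 i3 k) ->
  wsum3 w1 w2 w3 (fun i1 i2 i3 => bform M (y1 i1 i2 i3) (y1 i1 i2 i3))
  - wsum3 w1 w2 w3 (fun i1 i2 i3 => bform M (y0 i1 i2 i3) (y0 i1 i2 i3))
  = 2%:R * c * wsum3 w1 w2 w3
      (fun i1 i2 i3 => \sum_k b k * bform M (Y i1 i2 i3 k) (D i1 i2 i3 k)).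
Proof.
move=> symM sympl defY defy1; rewrite /wsum3 -sumrB mulr_sumr; apply: eq_bigr => i1 _.
rewrite -sumrB mulr_sumr; apply: eq_bigr => i2 _.
rewrite -sumrB mulr_sumr; apply: eq_bigr => i3 _.
rewrite -mulrBr (symplectic_rk_bform_increment symM sympl (defY i1 i2 i3) (defy1 i1 i2 i3)).
by ring.
Qed.

Section LocalEnergyBalance.
Variables (R : realFieldType) (r s iota sigma : nat).
Variables (a : 'I_r -> 'I_r -> R) (b : 'I_r -> R).
Variables (atil : 'I_s -> 'I_s -> R) (bt : 'I_s -> R).
Variables (ab : 'I_iota -> 'I_iota -> R) (bb : 'I_iota -> R).
Variables (ah : 'I_sigma -> 'I_sigma -> R) (bh : 'I_sigma -> R).

Let stage_sum (f : 'I_s -> 'I_iota -> 'I_sigma -> 'I_r -> R) : R :=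
  \sum_m \sum_p \sum_l \sum_k bt m * bb p * bh l * b k * f m p l k.

Lemma stage_sum_t f : wsum3 bt bb bh (fun m p l => \sum_k b k * f m p l k) = stage_sum f.
Proof.
do 3 apply: eq_bigr => ? _.
by rewrite mulr_sumr; apply: eq_bigr => k _; rewrite mulrA.
Qed.

Lemma stage_sum_x f : wsum3 bb bh b (fun p l k => \sum_m bt m * f m p l k) = stage_sum f.
Proof.
rewrite /stage_sum [RHS]exchange_big; apply: eq_bigr => p _.
rewrite [RHS]exchange_big; apply: eq_bigr => l _.
rewrite [RHS]exchange_big; apply: eq_bigr => k _.
by rewrite mulr_sumr; apply: eq_bigr => m _; ring.
Qed.

Lemma stage_sum_y f : wsum3 bt bh b (fun m l k => \sum_p bb p * f m p l k) = stage_sum f.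
Proof.
apply: eq_bigr => m _; rewrite [RHS]exchange_big; apply: eq_bigr => l _.
rewrite [RHS]exchange_big; apply: eq_bigr => k _.
by rewrite mulr_sumr; apply: eq_bigr => p _; ring.
Qed.

Lemma stage_sum_z f : wsum3 bt bb b (fun m p k => \sum_l bh l * f m p l k) = stage_sum f.
Proof.
apply: eq_bigr => m _; apply: eq_bigr => p _.
rewrite [RHS]exchange_big; apply: eq_bigr => k _.
by rewrite mulr_sumr; apply: eq_bigr => l _; ring.
Qed.

Hypothesis symplectic_t : forall k j, b k * b j - b k * a k j - b j * a j k = 0.
Hypothesis symplectic_x : forall m n, bt m * bt n - bt m * atil m n - bt n * atil n m = 0.
Hypothesis symplectic_y : forall p q, bb p * bb q - bb p * ab p q - bb q * ab q p = 0.
Hypothesis symplectic_z : forall l v, bh l * bh v - bh l * ah l v - bh v * ah v l = 0.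

Variables (lam tau dx dy dz : R).
Hypotheses (tau_neq0 : tau != 0) (dx_neq0 : dx != 0) (dy_neq0 : dy != 0) (dz_neq0 : dz != 0).

Variables (U dT dX dY dZ : 'I_s -> 'I_iota -> 'I_sigma -> 'I_r -> 'cV[R]_6).
Variables (dW : 'I_s -> 'I_iota -> 'I_sigma -> 'I_r -> R).
Variables (E0 E1 : 'I_s -> 'I_iota -> 'I_sigma -> 'cV[R]_6).
Variables (Fx0 Fx1 : 'I_iota -> 'I_sigma -> 'I_r -> 'cV[R]_6).
Variables (Fy0 Fy1 : 'I_s -> 'I_sigma -> 'I_r -> 'cV[R]_6).
Variables (Fz0 Fz1 : 'I_s -> 'I_iota -> 'I_r -> 'cV[R]_6).

Hypothesis stage_t : forall m p l k, U m p l k = E0 m p l + tau *: \sum_j a k j *: dT m p l j.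
Hypothesis step_t : forall m p l, E1 m p l = E0 m p l + tau *: \sum_k b k *: dT m p l k.
Hypothesis stage_x : forall m p l k, U m p l k = Fx0 p l k + dx *: \sum_n atil m n *: dX n p l k.
Hypothesis step_x : forall p l k, Fx1 p l k = Fx0 p l k + dx *: \sum_m bt m *: dX m p l k.
Hypothesis stage_y : forall m p l k, U m p l k = Fy0 m l k + dy *: \sum_q ab p q *: dY m q l k.
Hypothesis step_y : forall m l k, Fy1 m l k = Fy0 m l k + dy *: \sum_p bb p *: dY m p l k.
Hypothesis stage_z : forall m p l k, U m p l k = Fz0 m p k + dz *: \sum_v ah l v *: dZ m p v k.
Hypothesis step_z : forall m p k, Fz1 m p k = Fz0 m p k + dz *: \sum_u bh u *: dZ m p u k.
Hypothesis maxwell_stage : forall m p l k,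
  tau *: (Kmat R *m dT m p l k)
  + tau *: (Lmat (Dmat1 R) *m dX m p l k + Lmat (Dmat2 R) *m dY m p l k
            + Lmat (Dmat3 R) *m dZ m p l k)
  = dW m p l k *: gradS lam (U m p l k).

Let M1 := Kmat R *m Lmat (Dmat1 R).
Let M2 := Kmat R *m Lmat (Dmat2 R).
Let M3 := Kmat R *m Lmat (Dmat3 R).

Lemma local_energy_balance :
  wsum3 bt bb bh (fun m p l => sqnorm3 (Epart (E1 m p l)) + sqnorm3 (Hpart (E1 m p l)))
  - wsum3 bt bb bh (fun m p l => sqnorm3 (Epart (E0 m p l)) + sqnorm3 (Hpart (E0 m p l)))
  = tau / dx * (wsum3 bb bh b (fun p l k => bform M1 (Fx1 p l k) (Fx1 p l k))
                - wsum3 bb bh b (fun p l k => bform M1 (Fx0 p l k) (Fx0 p l k)))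
  + tau / dy * (wsum3 bt bh b (fun m l k => bform M2 (Fy1 m l k) (Fy1 m l k))
                - wsum3 bt bh b (fun m l k => bform M2 (Fy0 m l k) (Fy0 m l k)))
  + tau / dz * (wsum3 bt bb b (fun m p k => bform M3 (Fz1 m p k) (Fz1 m p k))
                - wsum3 bt bb b (fun m p k => bform M3 (Fz0 m p k) (Fz0 m p k))).
Proof.
pose flux M (dV : 'I_s -> 'I_iota -> 'I_sigma -> 'I_r -> 'cV[R]_6) m p l k :=
  bform M (U m p l k) (dV m p l k).
rewrite !(eq_wsum3 _ _ _ (fun m p l => energy_bform _)).
rewrite (wsum3_rk_increment _ _ _ (trmx1 _ _) symplectic_t stage_t step_t) stage_sum_t.
rewrite (wsum3_rk_increment _ _ _ (tr_Kmat_Lmat (tr_Dmat1 R)) symplectic_x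
  (fun p l k m => stage_x m p l k) step_x).
rewrite (wsum3_rk_increment _ _ _ (tr_Kmat_Lmat (tr_Dmat2 R)) symplectic_y
  (fun m l k p => stage_y m p l k) step_y).
rewrite (wsum3_rk_increment _ _ _ (tr_Kmat_Lmat (tr_Dmat3 R)) symplectic_z
  (fun m p k l => stage_z m p l k) step_z).
rewrite (stage_sum_x (flux M1 dX)) (stage_sum_y (flux M2 dY)) (stage_sum_z (flux M3 dZ)).
have split : stage_sum (fun m p l k => bform 1%:M (U m p l k) (dT m p l k))
    = stage_sum (flux M1 dX) + stage_sum (flux M2 dY) + stage_sum (flux M3 dZ).
  rewrite /stage_sum -!big_split; apply: eq_bigr => m _.
  rewrite -!big_split; apply: eq_bigr => p _.
  rewrite -!big_split; apply: eq_bigr => l _.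
  rewrite -!big_split; apply: eq_bigr => k _ /=.
  rewrite (bform_stage_derivative tau_neq0 (maxwell_stage m p l k)).
  by rewrite /flux !bformDr !bform_mulmxr; ring.
by rewrite split; field; rewrite dx_neq0 dy_neq0 dz_neq0.
Qed.

End LocalEnergyBalance.

Theorem mainTheorem3
  (R : realFieldType) (lam : R)
  (N1 N2 N3 : nat)                 (* numbers of spatial cells (periodic grid) *)
  (r s iota sigma : nat)           (* numbers of stages in t, x, y, z *)
  (a : 'I_r -> 'I_r -> R) (b : 'I_r -> R)
  (atil : 'I_s -> 'I_s -> R) (bt : 'I_s -> R)
  (ab : 'I_iota -> 'I_iota -> R) (bb : 'I_iota -> R)
  (ah : 'I_sigma -> 'I_sigma -> R) (bh : 'I_sigma -> R)
  (tau dx dy dz : R)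
  (N : nat)
  (* stage values and discrete derivatives, indexed by rho, cell, m p l k *)
  (Ups dT dX dY dZ : nat -> 'I_N1 -> 'I_N2 -> 'I_N3 ->
     'I_s -> 'I_iota -> 'I_sigma -> 'I_r -> 'cV[R]_6)
  (* time-level values E^rho_{mpl} on each cell *)
  (En : nat -> 'I_N1 -> 'I_N2 -> 'I_N3 -> 'I_s -> 'I_iota -> 'I_sigma -> 'cV[R]_6)
  (* face values: Fx .. i1 i2 i3 p l k = E^k_{i1 p l} (left x-face of cell i1), etc. *)
  (Fx : nat -> 'I_N1 -> 'I_N2 -> 'I_N3 -> 'I_iota -> 'I_sigma -> 'I_r -> 'cV[R]_6)
  (Fy : nat -> 'I_N1 -> 'I_N2 -> 'I_N3 -> 'I_s -> 'I_sigma -> 'I_r -> 'cV[R]_6)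
  (Fz : nat -> 'I_N1 -> 'I_N2 -> 'I_N3 -> 'I_s -> 'I_iota -> 'I_r -> 'cV[R]_6)
  (* Wiener increments at the stage points (one realization) *)
  (dW : nat -> 'I_N1 -> 'I_N2 -> 'I_N3 -> 'I_s -> 'I_iota -> 'I_sigma -> 'I_r -> R) :
  0 < tau -> 0 < dx -> 0 < dy -> 0 < dz ->
  (* symplectic conditions *)
  (forall k j, b k * b j - b k * a k j - b j * a j k = 0) ->
  (forall p q, bb p * bb q - bb p * ab p q - bb q * ab q p = 0) ->
  (forall m n, bt m * bt n - bt m * atil m n - bt n * atil n m = 0) ->
  (forall l v, bh l * bh v - bh l * ah l v - bh v * ah v l = 0) ->
  (* temporal Runge-Kutta relations *)
  (forall rho i1 i2 i3 m p l k, (rho <= N)%N ->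
     Ups rho i1 i2 i3 m p l k =
       En rho i1 i2 i3 m p l + tau *: \sum_(j < r) a k j *: dT rho i1 i2 i3 m p l j) ->
  (forall rho i1 i2 i3 m p l, (rho <= N)%N ->
     En rho.+1 i1 i2 i3 m p l =
       En rho i1 i2 i3 m p l + tau *: \sum_(k < r) b k *: dT rho i1 i2 i3 m p l k) ->
  (* x-direction relations (periodic: ordS) *)
  (forall rho i1 i2 i3 m p l k, (rho <= N)%N ->
     Ups rho i1 i2 i3 m p l k =
       Fx rho i1 i2 i3 p l k + dx *: \sum_(n < s) atil m n *: dX rho i1 i2 i3 n p l k) ->
  (forall rho i1 i2 i3 p l k, (rho <= N)%N ->
     Fx rho (ordS i1) i2 i3 p l k =
       Fx rho i1 i2 i3 p l k + dx *: \sum_(m < s) bt m *: dX rho i1 i2 i3 m p l k) ->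
  (* y-direction relations *)
  (forall rho i1 i2 i3 m p l k, (rho <= N)%N ->
     Ups rho i1 i2 i3 m p l k =
       Fy rho i1 i2 i3 m l k + dy *: \sum_(q < iota) ab p q *: dY rho i1 i2 i3 m q l k) ->
  (forall rho i1 i2 i3 m l k, (rho <= N)%N ->
     Fy rho i1 (ordS i2) i3 m l k =
       Fy rho i1 i2 i3 m l k + dy *: \sum_(p < iota) bb p *: dY rho i1 i2 i3 m p l k) ->
  (* z-direction relations *)
  (forall rho i1 i2 i3 m p l k, (rho <= N)%N ->
     Ups rho i1 i2 i3 m p l k =
       Fz rho i1 i2 i3 m p k + dz *: \sum_(v < sigma) ah l v *: dZ rho i1 i2 i3 m p v k) ->
  (forall rho i1 i2 i3 m p k, (rho <= N)%N ->
     Fz rho i1 i2 (ordS i3) m p k =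
       Fz rho i1 i2 i3 m p k + dz *: \sum_(u < sigma) bh u *: dZ rho i1 i2 i3 m p u k) ->
  (* the discrete stochastic Hamiltonian equation at each stage point *)
  (forall rho i1 i2 i3 m p l k, (rho <= N)%N ->
     tau *: (Kmat R *m dT rho i1 i2 i3 m p l k)
     + tau *: (Lmat (Dmat1 R) *m dX rho i1 i2 i3 m p l k
               + Lmat (Dmat2 R) *m dY rho i1 i2 i3 m p l k
               + Lmat (Dmat3 R) *m dZ rho i1 i2 i3 m p l k)
     = dW rho i1 i2 i3 m p l k *: gradS lam (Ups rho i1 i2 i3 m p l k)) ->
  forall rho, (rho <= N)%N ->
    \sum_(i1 < N1) \sum_(i2 < N2) \sum_(i3 < N3)
      \sum_(m < s) \sum_(p < iota) \sum_(l < sigma)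
        bt m * bb p * bh l *
        (sqnorm3 (Epart (En rho.+1 i1 i2 i3 m p l))
         + sqnorm3 (Hpart (En rho.+1 i1 i2 i3 m p l)))
    =
    \sum_(i1 < N1) \sum_(i2 < N2) \sum_(i3 < N3)
      \sum_(m < s) \sum_(p < iota) \sum_(l < sigma)
        bt m * bb p * bh l *
        (sqnorm3 (Epart (En rho i1 i2 i3 m p l))
         + sqnorm3 (Hpart (En rho i1 i2 i3 m p l))).
Proof.
move=> tau_gt0 dx_gt0 dy_gt0 dz_gt0 sympl_t sympl_y sympl_x sympl_z stage_t step_t
  stage_x step_x stage_y step_y stage_z step_z maxwell_stage rho le_rhoN.
apply: periodic_grid_balance => i1 i2 i3.
exact: (local_energy_balance sympl_t sympl_x sympl_y sympl_z
  (lt0r_neq0 tau_gt0) (lt0r_neq0 dx_gt0) (lt0r_neq0 dy_gt0) (lt0r_neq0 dz_gt0)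
  (fun m p l k => stage_t rho i1 i2 i3 m p l k le_rhoN)
  (fun m p l => step_t rho i1 i2 i3 m p l le_rhoN)
  (fun m p l k => stage_x rho i1 i2 i3 m p l k le_rhoN)
  (fun p l k => step_x rho i1 i2 i3 p l k le_rhoN)
  (fun m p l k => stage_y rho i1 i2 i3 m p l k le_rhoN)
  (fun m l k => step_y rho i1 i2 i3 m l k le_rhoN)
  (fun m p l k => stage_z rho i1 i2 i3 m p l k le_rhoN)
  (fun m p k => step_z rho i1 i2 i3 m p k le_rhoN)
  (fun m p l k => maxwell_stage rho i1 i2 i3 m p l k le_rhoN)).
Qed.
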